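(* For every $n\ge 2$, $f(n,n-1)=f(n+1,n-1)-f(n,n-2)$.
   Context: A complete non-ambiguous matrix (CNM) of size $n$ is an $n\times n$ matrix $M=(m_{i,j})$ with entries in $\{0,1\}$ whose support $T=\{(i,j): m_{i,j}=1\}$ (whose elements are called vertices) satisfies: (1) $(1,1)\in T$; (2) for every $p=(i,j)\in T$ with $p\neq(1,1)$, exactly one of the following holds: there is $(i',j)\in T$ with $i'<i$, or there is $(i,j')\in T$ with $j'<j$; (3) every row and every column of $M$ contains at least one vertex; (4) define the parent of $p=(i,j)\neq(1,1)$ to be $(i',j)$ with $i'<i$ maximal if such a vertex exists, and otherwise $(i,j')$ with $j'<j$ maximal; then every vertex is the parent of either zero or exactly two vertices. A vertex with no children is a leaf. A CNM of size $n$ is upper-diagonal if its leaves are exactly the positions $(i,n+1-i)$, $1\le i\le n$. For $n\ge 2$ and $0\le k\le n-2$, $f(n,k)$ is the number of upper-diagonal CNMs $M$ of size $n$ with $m_{i,n-i}=0$ for $1\le i\le k$ and $m_{k+1,n-k-1}=1$; $f(n,n-1)$ is the number of upper-diagonal CNMs of size $n$ with $m_{i,n-i}=0$ for all $1\le i\le n-1$; by convention $f(n,-1)=0$. *)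

From mathcomp Require Import all_boot.
Set Implicit Arguments. Unset Strict Implicit. Unset Printing Implicit Defensive.

(* Convention: a matrix of size n is
   represented by its support T : {set 'I_n * 'I_n}, with 0-based indices:
   the pair (i, j) stands for the paper's position (i+1, j+1). *)

Section CNM.
Variable n : nat.
Implicit Types (T : {set 'I_n * 'I_n}) (p q r : 'I_n * 'I_n).

Definition inT T (a b : nat) : bool :=
  [exists p in T, (p.1 == a :> nat) && (p.2 == b :> nat)].

Definition is_root p : bool := (p.1 == 0 :> nat) && (p.2 == 0 :> nat).

Definition has_above T p : bool :=
  [exists q in T, (q.2 == p.2) && (q.1 < p.1)].
Definition has_left T p : bool :=
  [exists q in T, (q.1 == p.1) && (q.2 < p.2)].

Definition parent_of T q p : bool :=
  [&& p \in T, q \in T, ~~ is_root p &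
   if has_above T p then
     [&& q.2 == p.2, q.1 < p.1 &
        [forall r in T, (r.2 == p.2) && (r.1 < p.1) ==> (r.1 <= q.1)]]
   else
     [&& q.1 == p.1, q.2 < p.2 &
        [forall r in T, (r.1 == p.1) && (r.2 < p.2) ==> (r.2 <= q.2)]]].

Definition children T q : {set 'I_n * 'I_n} := [set p | parent_of T q p].

Definition is_CNM T : bool :=
  [&& inT T 0 0,
      [forall p in T, ~~ is_root p ==> (has_above T p != has_left T p)],
      [forall i : 'I_n, [exists p in T, p.1 == i]] &&
                [forall j : 'I_n, [exists p in T, p.2 == j]] &
      [forall q in T, (#|children T q| == 0) || (#|children T q| == 2)]].

Definition is_leaf T q : bool := (q \in T) && (#|children T q| == 0).

(* leaves are exactly the paper's positions (i, n+1-i), 1 <= i <= n,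
   i.e. the 0-based positions (a, b) with a + b = n - 1 *)
Definition upper_diagonal T : bool :=
  [forall p, is_leaf T p == (p.1 + p.2 == n.-1)].

Definition is_UDCNM T : bool := is_CNM T && upper_diagonal T.

End CNM.

(* f n k for 0 <= k <= n-1 (n >= 2): paper's m_{i,n-i} = 0 for 1 <= i <= k
   (0-based position (i-1, n-1-i)), and, when k <= n-2, m_{k+1,n-k-1} = 1
   (0-based position (k, n-2-k)). For k = n-1 this is the paper's f(n,n-1). *)
Definition f (n k : nat) : nat :=
  #|[set T : {set 'I_n * 'I_n} |
      [&& is_UDCNM T,
          [forall a : 'I_k, ~~ inT T a (n - 2 - a)] &
          (k < n.-1) ==> inT T k (n - 2 - k)]]|.

From mathcomp Require Import all_boot all_order all_algebra.
From mathcomp Require Import zify.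
Set Implicit Arguments. Unset Strict Implicit. Unset Printing Implicit Defensive.
Import GRing.Theory.

(* Let ud_free m be the set of upper-diagonal CNMs of size m+2 with no vertex
   on the sub-antidiagonal {(a, m-a) : a < m}.  Splitting it according to
   whether (m, 0) is a vertex gives f(m+2, m+1) and f(m+2, m).  On the other
   side, f(m+3, m+1) counts the upper-diagonal CNMs of size m+3 with no vertex
   at (a, m+1-a), a <= m, and a vertex at (m+1, 0).  These are exactly the
   images of ud_free m under the column insertion insert_col: insert an empty
   column at index 1 and add the leaves (m+1, 1) and (m+2, 0), which become the
   two children of the old bottom-left leaf (m+1, 0). *)

(* Cells and indices are compared as numbers, so that lia can reason about
   them. *)
Lemma cell_eqE k (p q : 'I_k * 'I_k) :
  (p == q) = (p.1 == q.1 :> nat) && (p.2 == q.2 :> nat).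
Proof. by case: p q => [a b] [c d]. Qed.

Lemma ord_eqE k (i j : 'I_k) : (i == j) = (i == j :> nat).
Proof. by []. Qed.

Lemma forall_ordS k (P : nat -> bool) :
  [forall a : 'I_k.+1, P a] = [forall a : 'I_k, P a] && P k.
Proof.
apply/forallP/andP => [H | [/forallP H Pk] a].
  by split; [apply/forallP => a; exact: (H (widen_ord (leqnSn k) a)) | exact: (H ord_max)].
have [ltak | leka] := ltnP a k; first exact: (H (Ordinal ltak)).
by have -> : nat_of_ord a = k by have := ltn_ord a; lia.
Qed.

Section UpperDiagonal.
Variable k : nat.
Implicit Types (T : {set 'I_k * 'I_k}) (p q : 'I_k * 'I_k).

Lemma parent_adjacent T q p : parent_of T q p ->
  ((q.2 == p.2 :> nat) && (q.1 < p.1)) || ((q.1 == p.1 :> nat) && (q.2 < p.2)).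
Proof. by case/and4P=> _ _ _; case: ifP => _ /and3P[/eqP-> -> _]; rewrite eqxx ?orbT. Qed.

(* Every vertex of an upper-diagonal CNM lies on or above the leaf antidiagonal
   i + j = k - 1: a vertex below it is not a leaf, so it has a child, which is
   even farther below; induct on the distance to the bottom-right corner. *)
Lemma UD_above_antidiagonal T : upper_diagonal T ->
  forall p, p \in T -> p.1 + p.2 <= k.-1.
Proof.
move=> /forallP UD.
suff H s p : p \in T -> 2 * k - (p.1 + p.2) <= s -> p.1 + p.2 <= k.-1.
  by move=> p pT; apply: (H (2 * k)) => //; lia.
elim: s p => [|s IH] p pT hs; first by have := ltn_ord p.1; have := ltn_ord p.2; lia.
have [// | below] := leqP (p.1 + p.2) k.-1.
have : children T p != set0.
  rewrite -cards_eq0; move: (UD p); rewrite /is_leaf pT /=.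
  have -> : (p.1 + p.2 == k.-1) = false by apply/negbTE; lia.
  by case: (#|children T p| == 0).
case/set0Pn => -[a b]; rewrite inE => pc; have /= adjacent := parent_adjacent pc.
have abT : (a, b) \in T by case/and4P: pc.
have /= : a + b <= k.-1 by apply: IH abT _; rewrite /=; lia.
by lia.
Qed.

Lemma UD_antidiagonal_vertex T : upper_diagonal T ->
  forall p, p.1 + p.2 = k.-1 -> p \in T.
Proof.
by move=> /forallP UD p hp; move: (UD p); rewrite hp eqxx /is_leaf; case: (p \in T).
Qed.

End UpperDiagonal.

Section ColumnInsertion.
Variable m : nat.
Notation cell := ('I_m.+2 * 'I_m.+2)%type.
Notation cell' := ('I_m.+3 * 'I_m.+3)%type.
Implicit Types (T : {set cell}).

Definition col1 : 'I_m.+3 := @Ordinal m.+3 1 isT.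

(* The cell (i, j) of size m+2 moves to (i, bump 1 j) in size m+3: column 0
   stays, the columns j >= 1 move one step right, leaving column 1 free. *)
Definition shift (p : cell) : cell' := (widen_ord (leqnSn _) p.1, lift col1 p.2).

(* The bottom-left leaf (m+1, 0) of size m+2 and its two new children. *)
Definition corner : cell := (ord_max, ord0).
Definition cornerR : cell' := (widen_ord (leqnSn _) ord_max, col1).
Definition cornerD : cell' := (ord_max, ord0).

Definition insert_col (T : {set cell}) : {set cell'} :=
  shift @: T :|: [set cornerR; cornerD].

Lemma shift_inj : injective shift.
Proof.
move=> p q /eqP; rewrite cell_eqE /= /bump => H.
by apply/eqP; rewrite cell_eqE; lia.
Qed.

Lemma shift_cornerR p : (shift p == cornerR) = false.
Proof. by rewrite cell_eqE /= /bump; lia. Qed.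
Lemma shift_cornerD p : (shift p == cornerD) = false.
Proof. by rewrite cell_eqE /=; have := ltn_ord p.1; lia. Qed.
Lemma cornerRD : (cornerR == cornerD) = false.
Proof. by rewrite cell_eqE /=; lia. Qed.

Lemma mem_insert_col T p' : (p' \in insert_col T) =
  [|| p' \in shift @: T, p' == cornerR | p' == cornerD].
Proof. by rewrite !inE. Qed.

Lemma shift_insert T p : (shift p \in insert_col T) = (p \in T).
Proof.
by rewrite mem_insert_col shift_cornerR shift_cornerD !orbF (mem_imset _ _ shift_inj).
Qed.
Lemma cornerR_insert T : cornerR \in insert_col T.
Proof. by rewrite mem_insert_col eqxx orbT. Qed.
Lemma cornerD_insert T : cornerD \in insert_col T.
Proof. by rewrite mem_insert_col eqxx !orbT. Qed.
Lemma cornerR_shiftF (A : {set cell}) : (cornerR \in shift @: A) = false.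
Proof. by apply/negbTE/imsetP => -[p _ /eqP]; rewrite eq_sym shift_cornerR. Qed.
Lemma cornerD_shiftF (A : {set cell}) : (cornerD \in shift @: A) = false.
Proof. by apply/negbTE/imsetP => -[p _ /eqP]; rewrite eq_sym shift_cornerD. Qed.

Lemma existsE_insert T (P : pred cell') :
  [exists p' in insert_col T, P p'] =
  [|| [exists p in T, P (shift p)], P cornerR | P cornerD].
Proof.
apply/existsP/or3P => [[p' /andP[]] | ].
  rewrite mem_insert_col => /or3P[/imsetP[p pT ->] | /eqP-> | /eqP->] Pp'.
  - by apply: Or31; apply/existsP; exists p; rewrite pT.
  - exact: Or32.
  - exact: Or33.
case=> [/existsP[p /andP[pT Pp]] | PR | PD].
- by exists (shift p); rewrite shift_insert pT.
- by exists cornerR; rewrite cornerR_insert.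
- by exists cornerD; rewrite cornerD_insert.
Qed.

Lemma forallE_insert T (P : pred cell') :
  [forall p' in insert_col T, P p'] =
  [&& [forall p in T, P (shift p)], P cornerR & P cornerD].
Proof.
apply/forall_inP/and3P => [H | [/forall_inP H PR PD] p'].
  split; [ | exact: H (cornerR_insert T) | exact: H (cornerD_insert T)].
  by apply/forall_inP => p pT; apply: H; rewrite shift_insert.
by rewrite mem_insert_col => /or3P[/imsetP[p pT ->] | /eqP-> | /eqP->] //; apply: H.
Qed.

(* The cells of size m+3 that are neither shifted cells nor new leaves: the
   rest of column 1 and the rest of the last row. *)
Definition outside (p' : cell') : bool :=
  ((p'.2 == 1 :> nat) && (p'.1 != m.+1 :> nat)) ||
  ((p'.1 == m.+2 :> nat) && (p'.2 != 0 :> nat)).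

Lemma cellP (p' : cell') :
  [\/ exists p, p' = shift p, p' = cornerR, p' = cornerD | outside p'].
Proof.
case: p' => i j; rewrite /outside /=.
have [lti | lei] := ltnP i m.+2.
  case: (unliftP col1 j) => [j' -> | ->].
    by apply: Or41; exists (Ordinal lti, j'); apply/eqP; rewrite cell_eqE /= !eqxx.
  case: (i =P m.+1 :> nat) => [i1 | _]; last by apply: Or44.
  by apply: Or42; apply/eqP; rewrite cell_eqE /= i1 !eqxx.
have i2 : i = m.+2 :> nat by have := ltn_ord i; lia.
case: (j =P 0 :> nat) => [j0 | _]; last by apply: Or44; rewrite i2 eqxx orbT.
by apply: Or43; apply/eqP; rewrite cell_eqE /= i2 j0 !eqxx.
Qed.

Lemma outside_shiftF (A : {set cell}) p' : outside p' -> (p' \in shift @: A) = false.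
Proof.
apply: contraTF => /imsetP[[a b] _ ->]; rewrite /outside /= /bump.
by have := ltn_ord a; lia.
Qed.

Lemma outside_cornersF p' : outside p' -> (p' \in [set cornerR; cornerD]) = false.
Proof. by apply: contraTF; rewrite !inE => /orP[] /eqP->; rewrite /outside /=; lia. Qed.

Lemma outside_insertF T p' : outside p' -> (p' \in insert_col T) = false.
Proof. by move=> out; rewrite in_setU outside_shiftF ?outside_cornersF. Qed.

Lemma root_shift (p : cell) : is_root (shift p) = is_root p.
Proof. by rewrite /is_root /= /bump; case: (p.2 : nat). Qed.
Lemma root_cornerR : is_root cornerR = false. Proof. by []. Qed.
Lemma root_cornerD : is_root cornerD = false. Proof. by []. Qed.

Lemma inT_insert T a b : inT (insert_col T) a b =
  [|| [exists p in T, (p.1 == a :> nat) && (bump 1 p.2 == b)],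
      (m.+1 == a) && (1 == b) | (m.+2 == a) && (0 == b)].
Proof. by rewrite /inT existsE_insert. Qed.

Lemma inT_insert_root T : inT (insert_col T) 0 0 = inT T 0 0.
Proof.
by rewrite inT_insert /= !orbF; apply: eq_existsb => p; rewrite /bump; case: (p.2 : nat).
Qed.

Lemma inT_insert_bump T a b : a <= m -> inT (insert_col T) a (bump 1 b) = inT T a b.
Proof.
move=> le_am; rewrite inT_insert /bump.
rewrite [X in _ || X](_ : _ = false) ?orbF; last by lia.
by apply: eq_existsb => p; congr (_ && (_ && _)); apply/eqP/eqP; lia.
Qed.

Lemma inT_insert_col1 T : inT (insert_col T) m 1 = false.
Proof.
rewrite inT_insert [X in _ || X](_ : _ = false) ?orbF; last by lia.
by apply/negbTE/existsP => -[p /and3P[_ _]]; rewrite /bump; lia.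
Qed.

Lemma inT_insert_corner T : inT (insert_col T) m.+1 0 = (corner \in T).
Proof.
rewrite inT_insert [X in _ || X](_ : _ = false) ?orbF; last by lia.
apply/existsP/idP => [[[a b] /and3P[abT /= /eqP a1 b0]] | cT]; last first.
  by exists corner; rewrite cT /= eqxx.
rewrite (_ : corner = (a, b)) //; apply/eqP; rewrite cell_eqE /= a1 eqxx /=.
by move: b0; rewrite /bump; lia.
Qed.

(* From now on T lies on or above the leaf antidiagonal of size m+2 and
   contains its bottom-left cell, as every upper-diagonal CNM does. *)
Section AboveAntidiagonal.
Variable T : {set cell}.
Hypothesis T_above : forall p : cell, p \in T -> p.1 + p.2 <= m.+1.
Hypothesis T_corner : corner \in T.

(* Shifting preserves the cells above and to the left of a vertex: the new
   leaves are never above a shifted cell, and cornerR is to the left of a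
   shifted cell only in row m+1, where T has no vertex beyond column 0. *)
Lemma has_above_shift (p : cell) : has_above (insert_col T) (shift p) = has_above T p.
Proof.
have below : (m.+2 < p.1) = false by apply/negbTE; rewrite -leqNgt ltnW.
rewrite /has_above existsE_insert /= eq_liftF below andbF !orbF.
by apply: eq_existsb => q; rewrite (inj_eq (@lift_inj _ _)).
Qed.

Lemma has_left_shift (p : cell) : p.1 + p.2 <= m.+1 ->
  has_left (insert_col T) (shift p) = has_left T p.
Proof.
move=> hp; rewrite /has_left existsE_insert /= !ord_eqE /= /bump.
rewrite [X in _ || X](_ : _ = false) ?orbF; last by have := ltn_ord p.1; lia.
by apply: eq_existsb => q; rewrite ord_eqE /=; congr (_ && (_ && _)); apply/idP/idP; lia.
Qed.

Lemma has_above_cornerR : has_above (insert_col T) cornerR = false.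
Proof.
rewrite /has_above existsE_insert /= ltnn !orbF.
by apply/negbTE/existsP => -[q /andP[_ /andP[]]]; rewrite ord_eqE /= /bump; lia.
Qed.

Lemma has_left_cornerR : has_left (insert_col T) cornerR.
Proof.
rewrite /has_left existsE_insert; apply/orP; left; apply/existsP; exists corner.
by rewrite T_corner !ord_eqE /= eqxx.
Qed.

Lemma has_above_cornerD : has_above (insert_col T) cornerD.
Proof.
rewrite /has_above existsE_insert; apply/orP; left; apply/existsP; exists corner.
by rewrite T_corner !ord_eqE /= ltnSn.
Qed.

Lemma has_left_cornerD : has_left (insert_col T) cornerD = false.
Proof.
rewrite /has_left existsE_insert /= !ord_eqE /= ltnn !andbF !orbF.
apply/negbTE/existsP => -[q /andP[_ /andP[]]].
by rewrite ord_eqE /=; have := ltn_ord q.1; lia.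
Qed.

Lemma parent_shift (q p : cell) :
  parent_of (insert_col T) (shift q) (shift p) = parent_of T q p.
Proof.
rewrite /parent_of !shift_insert root_shift has_above_shift.
case pT: (p \in T) => //=; congr (_ && (_ && _)).
have hp := T_above pT; have lt1 := ltn_ord p.1.
(* The maximality conditions contributed by the two new leaves are vacuous. *)
case: (has_above T p); rewrite forallE_insert /= !ord_eqE /= /bump;
  rewrite [X in _ && (_ && (_ && X))](_ : _ = true) ?andbT; try lia;
  congr [&& _, _ & _]; try by apply/idP/idP; lia.
all: apply: eq_forallb => r; rewrite !ord_eqE /= /bump.
all: by case: (r \in T) => //=; apply/idP/idP; lia.
Qed.

Lemma parent_cornerR (q : cell) :
  parent_of (insert_col T) (shift q) cornerR = (q \in T) && (q == corner).
Proof.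
rewrite /parent_of cornerR_insert shift_insert root_cornerR has_above_cornerR /=.
rewrite (_ : [forall r in _, _] = true) ?andbT; last first.
  by apply/forall_inP => r _; apply/implyP => /andP[_]; lia.
by rewrite cell_eqE !ord_eqE /= /bump; case: (q \in T) => //=; apply/idP/idP; lia.
Qed.

Lemma parent_cornerD (q : cell) :
  parent_of (insert_col T) (shift q) cornerD = (q \in T) && (q == corner).
Proof.
(* cornerD's parent is the lowest vertex above it in column 0, shift corner. *)
rewrite /parent_of cornerD_insert shift_insert root_cornerD has_above_cornerD /=.
case: (q \in T) => //=; rewrite cell_eqE; have lt1 := ltn_ord q.1.
apply/idP/idP => [/and3P[q2 _ /forall_inP maxq] | /andP[q1 q2]].
  have := maxq (shift corner); rewrite shift_insert T_corner /= => /(_ isT).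
  by move: q2; rewrite ord_eqE /= /bump; lia.
apply/and3P; split; try by move: q1 q2; rewrite ?ord_eqE /= /bump; lia.
by apply/forall_inP => r _; apply/implyP => /andP[_]; move: q1 => /=; lia.
Qed.

Lemma children_cornerR : children (insert_col T) cornerR = set0.
Proof.
apply/setP => p'; rewrite !inE; apply/negbTE/negP => par.
have := parent_adjacent par; case/and4P: par => + _ _ _.
rewrite mem_insert_col => /or3P[/imsetP[[a b] abT ->] | /eqP-> | /eqP->] /=; try lia.
by have := T_above abT; rewrite /= /bump; lia.
Qed.

Lemma children_cornerD : children (insert_col T) cornerD = set0.
Proof.
apply/setP => p'; rewrite !inE; apply/negbTE/negP => par.
have := parent_adjacent par; case/and4P: par => + _ _ _.
rewrite mem_insert_col => /or3P[/imsetP[[a b] abT ->] | /eqP-> | /eqP->] /=; try lia.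
by have := ltn_ord a; lia.
Qed.

Lemma children_corner : children T corner = set0.
Proof.
apply/setP => p; rewrite !inE; apply/negbTE/negP => par.
have := parent_adjacent par; case/and4P: par => pT _ _ _.
by have := T_above pT; have := ltn_ord p.1; rewrite /=; lia.
Qed.

Lemma children_shift (q : cell) : q \in T ->
  children (insert_col T) (shift q) =
  if q == corner then [set cornerR; cornerD] else shift @: children T q.
Proof.
move=> qT; apply/setP => p'; rewrite inE.
case: (cellP p') => [[p ->] | -> | -> | out].
- rewrite parent_shift; case: ifP => [/eqP-> | _].
    rewrite !inE shift_cornerR shift_cornerD.
    by move/setP/(_ p): children_corner; rewrite !inE.
  by rewrite (mem_imset _ _ shift_inj) inE.
- by rewrite parent_cornerR qT; case: ifP => _; rewrite ?inE ?eqxx ?cornerR_shiftF.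
- by rewrite parent_cornerD qT; case: ifP => _; rewrite ?inE ?eqxx ?orbT ?cornerD_shiftF.
- rewrite (_ : parent_of _ _ _ = false); last first.
    by apply: contraFF (outside_insertF T out) => /and4P[].
  by case: ifP => _; rewrite ?outside_cornersF ?outside_shiftF.
Qed.

Lemma card_children_shift (q : cell) : q \in T ->
  #|children (insert_col T) (shift q)| = if q == corner then 2 else #|children T q|.
Proof.
move=> qT; rewrite children_shift //; case: ifP => _.
  by rewrite cards2 cornerRD.
by rewrite card_imset //; exact: shift_inj.
Qed.

Lemma above_xor_left_insert :
  [forall p in insert_col T, ~~ is_root p ==>
     (has_above (insert_col T) p != has_left (insert_col T) p)] =
  [forall p in T, ~~ is_root p ==> (has_above T p != has_left T p)].
Proof.
rewrite forallE_insert root_cornerR root_cornerD has_above_cornerR has_left_cornerR.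
rewrite has_above_cornerD has_left_cornerD /= !andbT.
apply: eq_forallb => p; case pT: (p \in T) => //=.
by rewrite root_shift has_above_shift has_left_shift // T_above.
Qed.

Lemma rows_insert : [forall i : 'I_m.+3, [exists p in insert_col T, p.1 == i]] =
                    [forall i : 'I_m.+2, [exists p in T, p.1 == i]].
Proof.
apply/forallP/forallP => [rows i | rows i'].
  have := rows (widen_ord (leqnSn _) i); rewrite existsE_insert !ord_eqE /=.
  case/or3P => [/existsP[p /andP[pT pi]] | Ri | Di].
  - by apply/existsP; exists p; rewrite pT.
  - by apply/existsP; exists corner; rewrite T_corner ord_eqE.
  - by have := ltn_ord i; move: Di; lia.
rewrite existsE_insert; have [lti | lei] := ltnP i' m.+2.
  have /existsP[p /andP[pT pi]] := rows (Ordinal lti).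
  by apply/orP; left; apply/existsP; exists p; rewrite pT.
by apply/or3P; apply: Or33; rewrite ord_eqE /=; have := ltn_ord i'; lia.
Qed.

Lemma cols_insert : [forall j : 'I_m.+3, [exists p in insert_col T, p.2 == j]] =
                    [forall j : 'I_m.+2, [exists p in T, p.2 == j]].
Proof.
apply/forallP/forallP => [cols j | cols j'].
  have := cols (lift col1 j); rewrite existsE_insert /= eq_liftF /=.
  case/orP => [/existsP[p /andP[pT]] | D0].
  - by rewrite (inj_eq lift_inj) => pj; apply/existsP; exists p; rewrite pT.
  - apply/existsP; exists corner; rewrite T_corner ord_eqE.
    by move: D0; rewrite ord_eqE /= /bump; lia.
rewrite existsE_insert; case: (unliftP col1 j') => [j -> | ->].
  have /existsP[p /andP[pT pj]] := cols j.
  by apply/orP; left; apply/existsP; exists p; rewrite pT (inj_eq lift_inj).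
by apply/or3P; apply: Or32.
Qed.

Lemma two_or_no_children_insert :
  [forall q in insert_col T,
     (#|children (insert_col T) q| == 0) || (#|children (insert_col T) q| == 2)] =
  [forall q in T, (#|children T q| == 0) || (#|children T q| == 2)].
Proof.
rewrite forallE_insert children_cornerR children_cornerD cards0 /= !andbT.
apply: eq_forallb => q; case qT: (q \in T) => //=.
rewrite card_children_shift //; case: ifP => // /eqP->.
by rewrite children_corner cards0.
Qed.

Lemma leaf_shift (p : cell) :
  (is_leaf (insert_col T) (shift p) == ((shift p).1 + (shift p).2 == m.+2)) =
  (is_leaf T p == (p.1 + p.2 == m.+1)).
Proof.
have [-> | ncorner] := eqVneq p corner.
  rewrite /is_leaf shift_insert T_corner card_children_shift // eqxx.
  rewrite children_corner cards0 /bump /= !addn0 !eqxx.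
  by rewrite (_ : (m.+1 == m.+2) = false) //; lia.
have sum_eq : ((shift p).1 + (shift p).2 == m.+2) = (p.1 + p.2 == m.+1).
  have lt1 := ltn_ord p.1; move: ncorner; rewrite cell_eqE /= /bump => nc.
  by apply/idP/idP; lia.
rewrite sum_eq /is_leaf shift_insert; case pT: (p \in T) => //=.
by rewrite card_children_shift // (negbTE ncorner).
Qed.

Lemma upper_diagonal_insert : upper_diagonal (insert_col T) = upper_diagonal T.
Proof.
apply/forallP/forallP => [UD p | UD p']; first by rewrite -leaf_shift; exact: UD.
case: (cellP p') => [[p ->] | -> | -> | out]; first by rewrite leaf_shift.
- by rewrite /is_leaf cornerR_insert children_cornerR cards0 /= addn1 !eqxx.
- by rewrite /is_leaf cornerD_insert children_cornerD cards0 /= addn0 !eqxx.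
- by rewrite /is_leaf outside_insertF //=; move: out; rewrite /outside; lia.
Qed.

Lemma is_UDCNM_insert : is_UDCNM (insert_col T) = is_UDCNM T.
Proof.
rewrite /is_UDCNM /is_CNM inT_insert_root above_xor_left_insert rows_insert cols_insert.
by rewrite two_or_no_children_insert upper_diagonal_insert.
Qed.

End AboveAntidiagonal.

(* insert_col is injective, as T is recovered from the shifted cells. *)
Lemma insert_col_inj : injective insert_col.
Proof. by move=> T1 T2 eqT; apply/setP => p; rewrite -!(shift_insert _ p) eqT. Qed.

Definition ud_free : {set {set cell}} :=
  [set T | is_UDCNM T && [forall a : 'I_m, ~~ inT T a (m - a)]].
Definition ud_free_corner : {set {set cell'}} :=
  [set T' : {set cell'} | [&& is_UDCNM T',
     [forall a : 'I_m.+1, ~~ inT T' a (m.+1 - a)] & inT T' m.+1 0]].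

(* The sub-antidiagonal of size m+3 is the shifted sub-antidiagonal of size
   m+2 together with (m, 1), which lies in the inserted column. *)
Lemma subdiag_free_insert T :
  [forall a : 'I_m.+1, ~~ inT (insert_col T) a (m.+1 - a)] =
  [forall a : 'I_m, ~~ inT T a (m - a)].
Proof.
rewrite (forall_ordS m (fun a => ~~ inT (insert_col T) a (m.+1 - a))).
rewrite subSn // subnn inT_insert_col1 andbT.
apply: eq_forallb => a; have lt_am := ltn_ord a.
by rewrite (_ : m.+1 - a = bump 1 (m - a)) ?inT_insert_bump //; rewrite /bump; lia.
Qed.

Lemma insert_col_free T : T \in ud_free -> insert_col T \in ud_free_corner.
Proof.
rewrite !inE => /andP[UD free]; have /andP[_ UDdiag] := UD.
have T_corner : corner \in T by apply: (UD_antidiagonal_vertex UDdiag); rewrite /= addn0.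
rewrite is_UDCNM_insert ?UD ?subdiag_free_insert ?free ?inT_insert_corner //.
exact: UD_above_antidiagonal UDdiag.
Qed.

(* In a CNM, cornerR cannot have a vertex above it once its left neighbour
   shift corner is present: it has exactly one of the two. *)
Lemma no_vertex_above_cornerR (T' : {set cell'}) :
  is_CNM T' -> cornerR \in T' -> shift corner \in T' -> ~~ has_above T' cornerR.
Proof.
case/and4P => _ /forall_inP/(_ _ _)/implyP xor _ _ R' C'.
have left : has_left T' cornerR.
  by apply/existsP; exists (shift corner); rewrite C' !ord_eqE /= eqxx.
by move: (xor _ R' isT); rewrite left; case: has_above.
Qed.

Lemma ud_free_corner_insert (T' : {set cell'}) :
  T' \in ud_free_corner -> T' = insert_col [set p | shift p \in T'].
Proof.
rewrite inE => /and3P[/andP[CNM UD] _ /existsP[c /and3P[c' /eqP c1 /eqP c2]]].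
have above' := UD_above_antidiagonal UD.
have R' : cornerR \in T' by apply: (UD_antidiagonal_vertex UD); rewrite /= addn1.
have D' : cornerD \in T' by apply: (UD_antidiagonal_vertex UD); rewrite /= addn0.
have C' : shift corner \in T'.
  by rewrite (_ : shift corner = c) //; apply/eqP; rewrite cell_eqE c1 c2 /= !eqxx.
have noabove := no_vertex_above_cornerR CNM R' C'.
apply/setP => p'; case: (cellP p') => [[p ->] | -> | -> | out].
- by rewrite shift_insert inE.
- by rewrite cornerR_insert.
- by rewrite cornerD_insert.
rewrite outside_insertF //; apply/negbTE/negP => pT'.
move: out; rewrite /outside => /orP[/andP[/eqP col nrow] | /andP[/eqP row ncol]].
  have := above' _ pT'; rewrite col => bound.
  apply: (negP noabove); apply/existsP; exists p'; rewrite pT' !ord_eqE col /=.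
  by move: nrow; lia.
by have := above' _ pT'; rewrite row /=; move: ncol; lia.
Qed.

Lemma ud_free_cornerE : ud_free_corner = insert_col @: ud_free.
Proof.
apply/setP => T'; apply/idP/imsetP => [T'free | [T Tfree ->]]; last exact: insert_col_free.
set T := [set p | shift p \in T']; have eqT' := ud_free_corner_insert T'free.
exists T => //; move: T'free; rewrite eqT' !inE => /and3P[UD' free' corner'].
have T_above p : p \in T -> p.1 + p.2 <= m.+1.
  rewrite -(shift_insert T) => /(UD_above_antidiagonal (proj2 (andP UD'))).
  by have := ltn_ord p.1; rewrite /= /bump; lia.
rewrite inT_insert_corner in corner'.
by rewrite -(is_UDCNM_insert T_above corner') UD' -subdiag_free_insert.
Qed.

End ColumnInsertion.

Lemma f_corner m : f m.+3 m.+1 = #|ud_free m|.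
Proof.
rewrite -(card_imset _ (@insert_col_inj m)) -ud_free_cornerE.
by apply: eq_card => T; rewrite !inE /= !subSS !subn0 subnn ltnSn.
Qed.

Lemma f_without_corner m : f m.+2 m.+1 = #|ud_free m :\: [set T | inT T m 0]|.
Proof.
apply: eq_card => T; rewrite !inE /= !subSS !subn0 ltnn andbT.
rewrite (forall_ordS m (fun a => ~~ inT T a (m - a))) subnn.
by case: (inT T m 0); rewrite ?andbF ?andbT.
Qed.

Lemma f_with_corner m : f m.+2 m = #|ud_free m :&: [set T | inT T m 0]|.
Proof. by apply: eq_card => T; rewrite !inE /= !subSS !subn0 subnn ltnSn -andbA. Qed.

Local Open Scope ring_scope.

Theorem lemma4p9 (n : nat) : (2 <= n)%N ->
  (f n n.-1)%:Z = (f n.+1 n.-1)%:Z - (f n (n - 2))%:Z.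
Proof.
case: n => [|[|m]] // _; rewrite [(m.+2 - 2)%N]subSS subSS subn0 /=.
rewrite f_corner f_without_corner f_with_corner.
by rewrite -(cardsID [set T | inT T m 0] (ud_free m)) PoszD addrC addKr.
Qed.
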